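(* Let $D$ be an integral domain with quotient field $K$, let $L/K$ be an algebraic field extension, and let $A$ be any subring of $L$ containing $D$. Then for any $\mathrm{reg}(A)$-factroid $F$ of any $A$-submodule $M$ of $L$ such that $D\subseteq F$, one has $A \subseteq F$. In particular, $A$ is the only factroid of $A$ containing $D$.
   Context: $\mathrm{reg}(A)=A\setminus\{0\}$ for the domain $A$. For $T\subseteq A$ and an $A$-module $M$, a $T$-factroid of $M$ is an additive subgroup $F$ of $M$ such that for all $x\in M$ and $t\in T$, $tx\in F$ implies $x\in F$. A factroid of $A$ is a $\mathrm{reg}(A)$-factroid of the $A$-module $A$. *)

From HB Require Import structures.
From mathcomp Require Import all_boot all_order all_algebra fraction.
Set Implicit Arguments. Unset Strict Implicit. Unset Printing Implicit Defensive.
Import GRing.Theory.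
Local Open Scope ring_scope.

(* reg(A) = A \ {0}, for a subring A of a field L (a domain). *)
Definition reg (L : fieldType) (A : {pred L}) : {pred L} :=
  [pred x | (x \in A) && (x != 0)].

Definition is_submodule (L : fieldType) (A M : {pred L}) : Prop :=
  zmod_closed M /\ (forall a x, a \in A -> x \in M -> a * x \in M).

Definition is_factroid (L : fieldType) (T M F : {pred L}) : Prop :=
  [/\ {subset F <= M}, zmod_closed F &
      (forall x t, x \in M -> t \in T -> t * x \in F -> x \in F)].

Definition algebraic_over (K L : fieldType) (f : {rmorphism K -> L}) : Prop :=
  forall x : L, exists2 p : {poly K}, p != 0 & root (map_poly f p) x.

From HB Require Import structures.
From mathcomp Require Import all_boot all_order all_algebra fraction ring.
Set Implicit Arguments. Unset Strict Implicit. Unset Printing Implicit Defensive.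
Import GRing.Theory.
Local Open Scope ring_scope.

(* Each nonzero a in A is a root of some q over D with q(0) != 0: take a
   polynomial over K vanishing at a, divide out the powers of X, and clear
   denominators.  Writing q = q(0) + X q1 gives (- q1(a)) * a = q(0), where
   - q1(a) is a nonzero element of A and q(0) lies in D, hence in F.  Since
   1 in D lies in F, a lies in M, and the factroid property puts a in F. *)

Local Notation tofrac := (@FracField.tofrac _).
Local Notation "x %:F" := (tofrac x).

Lemma horner_drop1 (R : comNzRingType) (p : {poly R}) x :
  p.[x] = p`_0 + (drop_poly 1 p).[x] * x.
Proof.
rewrite -{1}(poly_take_drop 1 p) expr1 hornerD hornerMX.
by rewrite horner_poly big_ord1 expr0 mulr1.
Qed.

Lemma root_mul_coef0 (R : comNzRingType) (p : {poly R}) x :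
  root p x -> - (drop_poly 1 p).[x] * x = p`_0.
Proof.
move/rootP; rewrite horner_drop1 => /eqP.
by rewrite addrC addr_eq0 mulNr => /eqP ->; rewrite opprK.
Qed.

Lemma map_root_coef0_neq0 (R S : idomainType) (g : {rmorphism R -> S})
    (p : {poly R}) x :
  p != 0 -> x != 0 -> root (map_poly g p) x ->
  exists2 q : {poly R}, q`_0 != 0 & root (map_poly g q) x.
Proof.
move=> p0 x0; have [m [q]] := multiplicity_XsubC p 0.
rewrite p0 /= => q0 -> qXx; exists q; first by rewrite -horner_coef0.
move: qXx; rewrite rmorphM rmorphXn rmorphB /= map_polyX map_polyC /= raddf0.
rewrite rootM => /orP [//|].
by rewrite rootE horner_exp hornerXsubC subr0 expf_eq0 (negPf x0) andbF.
Qed.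

Section ClearDenominators.

Variable D : idomainType.

Lemma tofrac_denominator (x : {fraction D}) :
  exists2 d : D, d != 0 & exists n : D, x * d%:F = n%:F.
Proof.
elim/quotW: x => r; exists r.2; first exact: denom_ratioP.
exists r.1.
rewrite !piE; apply/eqmodP; rewrite /= FracField.equivfE /= /FracField.mulf.
by rewrite !numden_Ratio ?mulf_neq0 ?oner_eq0 ?denom_ratioP // !mulr1 mulrC.
Qed.

Lemma poly_clear_denominators (p : {poly {fraction D}}) :
  exists2 d : D, d != 0 & exists q : {poly D}, map_poly tofrac q = d%:F *: p.
Proof.
elim/poly_ind: p => [|p c [d d0 [q Eq]]].
  by exists 1; [exact: oner_neq0 | exists 0; rewrite map_poly0 scaler0].
have [e e0 [n En]] := tofrac_denominator c.
exists (d * e); first by rewrite mulf_neq0.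
exists (q * e%:P * 'X + (n * d)%:P).
rewrite rmorphD !rmorphM /= map_polyX !map_polyC /= Eq -En !rmorphM /=.
rewrite -!mul_polyC !rmorphM /=; ring.
Qed.

End ClearDenominators.

Section FactroidsContainingD.

Variables (D : idomainType) (L : fieldType) (f : {rmorphism {fraction D} -> L}).
Hypothesis f_algebraic : algebraic_over f.
Variable A : {pred L}.
Hypothesis A_subring : subring_closed A.
HB.instance Definition _ := GRing.isSubringClosed.Build L A A_subring.
Hypothesis D_sub_A : forall d : D, f d%:F \in A.

Lemma algebraic_root_coef0_neq0 (a : L) : a != 0 ->
  exists2 q : {poly D}, q`_0 != 0 & root (map_poly (f \o tofrac) q) a.
Proof.
move=> a0; have [p p0 pa] := f_algebraic a.
have [r r0 ra] := map_root_coef0_neq0 p0 a0 pa.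
have [d d0 [q Eq]] := poly_clear_denominators r.
exists q.
  by rewrite -tofrac_eq0 -coef_map Eq coefZ mulf_neq0 ?tofrac_eq0.
by rewrite map_poly_comp Eq map_polyZ rootZ ?fmorph_eq0 ?tofrac_eq0.
Qed.

Lemma reg_mul_in_D (a : L) : a \in A -> a != 0 ->
  exists2 b, b \in reg A & exists d : D, b * a = f d%:F.
Proof.
move=> aA a0; have [q q0 qa] := algebraic_root_coef0_neq0 a0.
have qaE := root_mul_coef0 qa; rewrite coef_map /= in qaE.
exists (- (drop_poly 1 (map_poly (f \o tofrac) q)).[a]); last by exists q`_0.
rewrite inE rpredN rpred_horner //=; last first.
  by apply/polyOverP => i; rewrite coef_drop_poly coef_map D_sub_A.
rewrite oppr_eq0; apply: contraNneq q0 => qa0.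
by move: qaE; rewrite qa0 oppr0 mul0r => /esym/eqP; rewrite fmorph_eq0 tofrac_eq0.
Qed.

Lemma subring_submodule : is_submodule A A.
Proof. by split; [exact: GRing.subring_closedB | move=> a x; apply: rpredM]. Qed.

Lemma ring_sub_factroid (M F : {pred L}) :
  is_submodule A M -> is_factroid (reg A) M F ->
  (forall d : D, f d%:F \in F) -> {subset A <= F}.
Proof.
move=> [M_zmod M_mul] [FM F_zmod F_div] D_sub_F a aA.
have [-> | a0] := eqVneq a 0; first by case: F_zmod.
have M1 : 1 \in M by apply: FM; rewrite -(rmorph1 f) -tofrac1.
have aM : a \in M by rewrite -[a]mulr1 M_mul.
have [b bA [d bad]] := reg_mul_in_D aA a0.
by apply: (F_div a b) => //; rewrite bad.
Qed.

End FactroidsContainingD.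

Theorem proposition4p13
  (D : idomainType) (L : fieldType) (f : {rmorphism {fraction D} -> L})
  (Halg : algebraic_over f)
  (A : {pred L}) (HA : subring_closed A)
  (HDA : forall d : D, f (FracField.tofrac d) \in A) :
  (forall M F : {pred L},
      is_submodule A M -> is_factroid (reg A) M F ->
      (forall d : D, f (FracField.tofrac d) \in F) ->
      {subset A <= F})
  /\
  (forall F : {pred L},
      is_factroid (reg A) A F ->
      (forall d : D, f (FracField.tofrac d) \in F) ->
      F =i A).
Proof.
split=> [M F|F FA D_sub_F x]; first exact: ring_sub_factroid.
apply/idP/idP; first by case: FA => + _ _; apply.
exact: ring_sub_factroid (subring_submodule HA) FA D_sub_F x.
Qed.
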